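(* Define the function $h(b)=(b^2-1)^7\Bigl(b\bigl(\alpha_{1,-6}\beta_{0,-4}-\alpha_{0,-6}\beta_{1,-4}\bigr)-\bigl(\alpha_{1,-6}\beta_{1,-4}-\alpha_{2,-6}\beta_{0,-4}\bigr)\Bigr)$ for $|b|>1$. Then: 1. $h$ is the restriction of a polynomial in $b$ of degree at most $5$, whose $b^5$-coefficient equals $\frac{2f(r_1,r_2)}{9m_0m_\infty n_1n_2}$; 2. $\lim_{b\to1^+}h(b)>0$ and $\lim_{b\to-1^-}h(b)>0$. Consequently, if $f(r_1,r_2)\neq0$, then $h$ has a zero $b$ with $|b|>1$.
   Context: Let $n_1,n_2$ be nonzero integers, $m_0,m_\infty$ positive integers, and $r_1,r_2$ reals with $0<|r_i|<1$ and $r_in_i>0$. Put $p_c(t)=(1+r_1t)(1+r_2t)$. For $|b|>1$ and $r=0,1,2$, define - $\alpha_{r,-6}=\int_{-1}^1(t+b)^{-6}t^rp_c(t)\,dt$; - $\beta_{r,-4}=\int_{-1}^1\bigl(\frac{2r_1}{n_1}(1+r_2t)+\frac{2r_2}{n_2}(1+r_1t)\bigr)t^r(t+b)^{-4}dt+(-1)^r(b-1)^{-4}\frac{p_c(-1)}{m_\infty}+(1+b)^{-4}\frac{p_c(1)}{m_0}$. Define $f(r_1,r_2)=9(m_0-m_\infty)n_1n_2-6(m_0+m_\infty)n_1n_2(r_1+r_2)+6(m_0-m_\infty)n_1n_2r_1r_2+3n_2(4m_0m_\infty-n_1(m_0-m_\infty))r_1^2+3n_1(4m_0m_\infty-n_2(m_0-m_\infty))r_2^2-(4m_0m_\infty(n_1+n_2)-3(m_0-m_\infty)n_1n_2)r_1^2r_2^2$.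 *)

From Stdlib Require Import Reals ZArith.
From Coquelicot Require Import Coquelicot.
Open Scope R_scope.

Definition pc (r1 r2 t : R) : R := (1 + r1 * t) * (1 + r2 * t).

Definition alpha6 (r1 r2 : R) (r : nat) (b : R) : R :=
  RInt (fun t => / (t + b) ^ 6 * t ^ r * pc r1 r2 t) (-1) 1.

Definition beta4 (n1 n2 : Z) (m0 minf : nat) (r1 r2 : R) (r : nat) (b : R) : R :=
  RInt (fun t => (2 * r1 / IZR n1 * (1 + r2 * t) + 2 * r2 / IZR n2 * (1 + r1 * t))
                  * t ^ r * / (t + b) ^ 4) (-1) 1
  + (-1) ^ r * / (b - 1) ^ 4 * pc r1 r2 (-1) / INR minf
  + / (1 + b) ^ 4 * pc r1 r2 1 / INR m0.

Definition hfun (n1 n2 : Z) (m0 minf : nat) (r1 r2 : R) (b : R) : R :=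
  let a := fun r => alpha6 r1 r2 r b in
  let be := fun r => beta4 n1 n2 m0 minf r1 r2 r b in
  (b ^ 2 - 1) ^ 7 *
  (b * (a 1%nat * be 0%nat - a 0%nat * be 1%nat)
   - (a 1%nat * be 1%nat - a 2%nat * be 0%nat)).

Definition ffun (n1 n2 : Z) (m0 minf : nat) (r1 r2 : R) : R :=
  let N1 := IZR n1 in let N2 := IZR n2 in
  let M0 := INR m0 in let Mi := INR minf in
  9 * (M0 - Mi) * N1 * N2
  - 6 * (M0 + Mi) * N1 * N2 * (r1 + r2)
  + 6 * (M0 - Mi) * N1 * N2 * r1 * r2
  + 3 * N2 * (4 * M0 * Mi - N1 * (M0 - Mi)) * r1 ^ 2
  + 3 * N1 * (4 * M0 * Mi - N2 * (M0 - Mi)) * r2 ^ 2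
  - (4 * M0 * Mi * (N1 + N2) - 3 * (M0 - Mi) * N1 * N2) * r1 ^ 2 * r2 ^ 2.

From Stdlib Require Import Reals ZArith Lra Lia.
From Coquelicot Require Import Coquelicot.
Open Scope R_scope.

(* Every integral in h is a combination of the moments
   M(j, n) = int_{-1}^{1} t^j (t + b)^(-n) dt, and writing t = (t + b) - b gives
   M(j+1, n+1) = M(j, n) - b M(j, n+1), down to
   M(0, n+1) = ((b - 1)^(-n) - (b + 1)^(-n)) / n.  So h is an explicit rational
   function of b, and clearing denominators shows it is a quintic polynomial whose
   values at b = 1 and b = -1 are (32/3)(1-r1)^2(1-r2)^2/m_inf and
   (32/3)(1+r1)^2(1+r2)^2/m_0.  When f <> 0 the degree is exactly 5, and a
   polynomial of odd degree that is positive at both 1 and -1 has a zero outside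
   [-1, 1]. *)

Lemma Rabs_gt_1 (b : R) : 1 < Rabs b <-> b < -1 \/ 1 < b.
Proof. unfold Rabs; destruct (Rcase_abs b); split; intros; lra. Qed.

Definition moment (j n : nat) (b : R) : R := RInt (fun t => t ^ j / (t + b) ^ n) (-1) 1.

(* [inv_pow_integral n b] is the value of the integral of (t + b)^(-(n+1)). *)
Definition inv_pow_integral (n : nat) (b : R) : R := (/ (b - 1) ^ n - / (b + 1) ^ n) / INR n.

Lemma shift_neq_0 (b t : R) : 1 < Rabs b -> -1 <= t <= 1 -> t + b <> 0.
Proof. rewrite Rabs_gt_1; lra. Qed.

Lemma ex_RInt_moment (j n : nat) (b : R) : 1 < Rabs b ->
  ex_RInt (fun t => t ^ j / (t + b) ^ n) (-1) 1.
Proof.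
  intros hb. apply (ex_RInt_continuous (V := R_CompleteNormedModule)). intros t ht.
  rewrite Rmin_left, Rmax_right in ht by lra.
  apply (ex_derive_continuous (fun t => t ^ j / (t + b) ^ n)).
  auto_derive. apply pow_nonzero, shift_neq_0; auto.
Qed.

Lemma moment_0 (n : nat) (b : R) : 1 < Rabs b ->
  moment 0 (S (S n)) b = inv_pow_integral (S n) b.
Proof.
  intros hb. assert (hn : INR (S n) <> 0) by (apply not_0_INR; lia).
  set (F t := - / (INR (S n) * (t + b) ^ S n)).
  apply is_RInt_unique.
  replace (inv_pow_integral (S n) b) with (minus (F 1) (F (-1))).
  2: { pose proof (shift_neq_0 b 1 hb ltac:(lra)). pose proof (shift_neq_0 b (-1) hb ltac:(lra)).
       unfold F, inv_pow_integral, minus, plus, opp; simpl.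
       replace (-1 + b) with (b - 1) in * by ring. replace (1 + b) with (b + 1) in * by ring.
       field. repeat split; auto; apply pow_nonzero; auto. }
  apply (is_RInt_derive F (fun t => t ^ 0 / (t + b) ^ S (S n))); intros t ht;
    rewrite Rmin_left, Rmax_right in ht by lra; pose proof (shift_neq_0 b t hb ht).
  - unfold F. auto_derive;
      change (match n with 0%nat => 1 | S _ => INR n + 1 end) with (INR (S n));
      change ((t + b) * (t + b) ^ n) with ((t + b) ^ S n).
    + apply Rmult_integral_contrapositive_currified; [exact hn | apply pow_nonzero; auto].
    + (* [field] does not recognise an equation stated in a Coquelicot module type *)
      match goal with |- ?u = ?v => change (@eq R u v) end.
      simpl pow. field. split; [apply pow_nonzero |]; auto.
  - apply (ex_derive_continuous (fun t => t ^ 0 / (t + b) ^ S (S n))).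
    auto_derive. change ((t + b) ^ S (S n) <> 0). apply pow_nonzero; auto.
Qed.

Lemma is_RInt_ext_R (f g : R -> R) (l : R) :
  (forall t, -1 < t < 1 -> f t = g t) -> is_RInt f (-1) 1 l -> is_RInt g (-1) 1 l.
Proof.
  intros hfg. apply is_RInt_ext. intros t ht.
  rewrite Rmin_left, Rmax_right in ht by lra. now apply hfg.
Qed.

Lemma moment_S (j n : nat) (b : R) : 1 < Rabs b ->
  moment (S j) (S n) b = moment j n b - b * moment j (S n) b.
Proof.
  intros hb. apply is_RInt_unique.
  apply (is_RInt_ext_R (fun t => minus (t ^ j / (t + b) ^ n) (scal b (t ^ j / (t + b) ^ S n)))).
  - intros t ht. assert (t + b <> 0) by (apply shift_neq_0; auto; lra).
    unfold minus, plus, opp, scal; simpl; unfold mult; simpl.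
    field. split; [apply pow_nonzero |]; auto.
  - apply (is_RInt_minus (V := R_CompleteNormedModule));
      [| apply (is_RInt_scal (V := R_CompleteNormedModule))];
      apply (RInt_correct (V := R_CompleteNormedModule)), ex_RInt_moment; exact hb.
Qed.

Fixpoint moment_closed (j n : nat) (b : R) : R :=
  match j with
  | 0%nat => inv_pow_integral (pred n) b
  | S j => moment_closed j (pred n) b - b * moment_closed j n b
  end.

(* [j + 2 <= n] keeps the recursion away from the logarithmic moment M(n - 1, n). *)
Lemma moment_eq_closed (j n : nat) (b : R) : (j + 2 <= n)%nat -> 1 < Rabs b ->
  moment j n b = moment_closed j n b.
Proof.
  revert n. induction j as [| j IH]; intros [| [| n]] hjn hb; try lia.
  - now apply moment_0.
  - rewrite moment_S by exact hb. simpl moment_closed.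
    rewrite !IH by (exact hb || lia). reflexivity.
Qed.

Lemma is_RInt_quadratic_moment (c0 c1 c2 : R) (j n : nat) (b : R) :
  1 < Rabs b ->
  is_RInt (fun t => (c0 + c1 * t + c2 * t ^ 2) * (t ^ j / (t + b) ^ n)) (-1) 1
    (c0 * moment j n b + c1 * moment (S j) n b + c2 * moment (S (S j)) n b).
Proof.
  intros hb.
  apply (is_RInt_ext_R (fun t => plus (plus (scal c0 (t ^ j / (t + b) ^ n))
           (scal c1 (t ^ S j / (t + b) ^ n))) (scal c2 (t ^ S (S j) / (t + b) ^ n)))).
  - intros t _. unfold plus, scal; simpl; unfold mult; simpl. unfold Rdiv. ring.
  - apply (is_RInt_plus (V := R_CompleteNormedModule));
      [apply (is_RInt_plus (V := R_CompleteNormedModule)) |];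
      apply (is_RInt_scal (V := R_CompleteNormedModule));
      apply (RInt_correct (V := R_CompleteNormedModule)), ex_RInt_moment; exact hb.
Qed.

Lemma alpha6_moments (r1 r2 : R) (r : nat) (b : R) : 1 < Rabs b ->
  alpha6 r1 r2 r b
  = moment r 6 b + (r1 + r2) * moment (S r) 6 b + r1 * r2 * moment (S (S r)) 6 b.
Proof.
  intros hb. unfold alpha6. apply is_RInt_unique.
  apply (is_RInt_ext_R (fun t => (1 + (r1 + r2) * t + r1 * r2 * t ^ 2) * (t ^ r / (t + b) ^ 6))).
  - intros t _. unfold pc, Rdiv. ring.
  - rewrite <- (Rmult_1_l (moment r 6 b)). now apply is_RInt_quadratic_moment.
Qed.

Lemma beta4_moments (n1 n2 : Z) (m0 minf : nat) (r1 r2 : R) (r : nat) (b : R) :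
  1 < Rabs b ->
  beta4 n1 n2 m0 minf r1 r2 r b
  = (2 * r1 / IZR n1 + 2 * r2 / IZR n2) * moment r 4 b
    + 2 * r1 * r2 * (/ IZR n1 + / IZR n2) * moment (S r) 4 b
    + (-1) ^ r * / (b - 1) ^ 4 * pc r1 r2 (-1) / INR minf
    + / (1 + b) ^ 4 * pc r1 r2 1 / INR m0.
Proof.
  intros hb. unfold beta4. do 2 f_equal. apply is_RInt_unique.
  apply (is_RInt_ext_R (fun t => ((2 * r1 / IZR n1 + 2 * r2 / IZR n2)
           + 2 * r1 * r2 * (/ IZR n1 + / IZR n2) * t + 0 * t ^ 2) * (t ^ r / (t + b) ^ 4))).
  - intros t _. unfold Rdiv. ring.
  - match goal with |- is_RInt _ _ _ ?v =>
      replace v with (v + 0 * moment (S (S r)) 4 b) by ring end.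
    now apply is_RInt_quadratic_moment.
Qed.

Definition poly_eval (c : nat -> R) (n : nat) (x : R) : R :=
  sum_f_R0 (fun k => c k * x ^ k) n.

Lemma Rabs_poly_eval_le (c : nat -> R) (n : nat) (x : R) : 1 <= Rabs x ->
  Rabs (poly_eval c n x) <= sum_f_R0 (fun k => Rabs (c k)) n * Rabs x ^ n.
Proof.
  intros hx. unfold poly_eval. eapply Rle_trans; [apply sum_f_R0_triangle |].
  rewrite Rmult_comm, scal_sum. apply sum_Rle. intros k hk.
  rewrite Rabs_mult, <- RPow_abs.
  apply Rmult_le_compat_l; [apply Rabs_pos | now apply Rle_pow].
Qed.

Lemma poly_sign_leading (c : nat -> R) (n : nat) (x : R) : 1 <= Rabs x ->
  sum_f_R0 (fun k => Rabs (c k)) n < Rabs (c (S n) * x) ->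
  0 < poly_eval c (S n) x * (c (S n) * x ^ S n).
Proof.
  intros hx hA.
  unfold poly_eval at 1. rewrite tech5. fold (poly_eval c n x).
  set (L := c (S n) * x ^ S n). set (Q := poly_eval c n x).
  assert (hQL : Rabs Q < Rabs L).
  { apply Rle_lt_trans with (1 := Rabs_poly_eval_le c n x hx).
    unfold L. simpl pow. rewrite <- Rmult_assoc, Rabs_mult, <- RPow_abs.
    apply Rmult_lt_compat_r; [apply pow_lt; lra | exact hA]. }
  pose proof (Rabs_pos Q). pose proof (Rle_abs (- (Q * L))).
  rewrite Rabs_Ropp, Rabs_mult in *.
  pose proof (Rsqr_abs L). unfold Rsqr in *. nra.
Qed.

Lemma odd_poly_neg_value (c : nat -> R) (m : nat) : c (S (2 * m)) <> 0 ->
  exists x, 1 < Rabs x /\ poly_eval c (S (2 * m)) x < 0.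
Proof.
  intros hc. set (d := S (2 * m)).
  set (A := sum_f_R0 (fun k => Rabs (c k)) (2 * m)).
  assert (hc' : 0 < Rabs (c d)) by now apply Rabs_pos_lt.
  assert (hA : 0 <= A) by (apply cond_pos_sum; intros; apply Rabs_pos).
  set (M := A / Rabs (c d) + 2).
  assert (hAM : Rabs (c d) * M = A + 2 * Rabs (c d)) by (unfold M; field; lra).
  assert (hM : 2 <= M) by nra.
  assert (hMd : 0 < M ^ d) by (apply pow_lt; lra).
  assert (hsign : forall x, Rabs x = M -> 0 < poly_eval c d x * (c d * x ^ d)).
  { intros x hx. apply poly_sign_leading; fold d A; rewrite ?Rabs_mult, hx; lra. }
  destruct (Rlt_or_le 0 (c d)) as [hpos | hneg].
  - exists (- M). split; [rewrite Rabs_Ropp, Rabs_pos_eq; lra |].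
    specialize (hsign (- M) ltac:(rewrite Rabs_Ropp, Rabs_pos_eq; lra)).
    replace ((- M) ^ d) with (- M ^ d) in hsign
      by (replace (- M) with (-1 * M) by ring; unfold d; rewrite Rpow_mult_distr, pow_1_odd; ring).
    assert (0 < c d * M ^ d) by now apply Rmult_lt_0_compat.
    rewrite <- Ropp_mult_distr_r in hsign. nra.
  - exists M. split; [rewrite Rabs_pos_eq; lra |].
    specialize (hsign M ltac:(rewrite Rabs_pos_eq; lra)).
    assert (c d < 0) by (destruct hneg; [assumption | contradiction]).
    assert (c d * M ^ d < 0) by now apply Rmult_neg_pos.
    nra.
Qed.

Lemma odd_poly_root_outside (c : nat -> R) (m : nat) : c (S (2 * m)) <> 0 ->
  0 < poly_eval c (S (2 * m)) 1 -> 0 < poly_eval c (S (2 * m)) (-1) ->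
  exists b, 1 < Rabs b /\ poly_eval c (S (2 * m)) b = 0.
Proof.
  intros hc hP1 hPm1.
  assert (hcont : continuity (poly_eval c (S (2 * m)))) by apply continuity_finite_sum.
  destruct (odd_poly_neg_value c m hc) as [x [hx hPx]].
  apply Rabs_gt_1 in hx as [hx | hx].
  - destruct (IVT_cor _ x (-1) hcont ltac:(lra) ltac:(nra)) as [z [hz hPz]].
    exists z. split; [| exact hPz].
    apply Rabs_gt_1. left. destruct (Req_dec z (-1)) as [-> |]; lra.
  - destruct (IVT_cor _ 1 x hcont ltac:(lra) ltac:(nra)) as [z [hz hPz]].
    exists z. split; [| exact hPz].
    apply Rabs_gt_1. right. destruct (Req_dec z 1) as [-> |]; lra.
Qed.

Lemma filterlim_at_right_agree (f g : R -> R) (a : R) :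
  (forall x, a < x -> f x = g x) -> continuity_pt g a ->
  filterlim f (at_right a) (locally (g a)).
Proof.
  intros hfg hg. apply (filterlim_ext_loc g).
  - exists (mkposreal 1 Rlt_0_1). intros x _ hx. symmetry. now apply hfg.
  - apply (filterlim_filter_le_1 (F := locally a)); [apply filter_le_within |].
    now apply continuity_pt_filterlim.
Qed.

Lemma filterlim_at_left_agree (f g : R -> R) (a : R) :
  (forall x, x < a -> f x = g x) -> continuity_pt g a ->
  filterlim f (at_left a) (locally (g a)).
Proof.
  intros hfg hg. apply (filterlim_ext_loc g).
  - exists (mkposreal 1 Rlt_0_1). intros x _ hx. symmetry. now apply hfg.
  - apply (filterlim_filter_le_1 (F := locally a)); [apply filter_le_within |].
    now apply continuity_pt_filterlim.
Qed.

(* The coefficients of h.  [hcoef_endpoint] comes from the point masses of beta at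
   t = 1 and t = -1 (weights 1/m_inf and 1/m_0; the reflection b -> -b, r_i -> -r_i
   exchanges them) and [hcoef_bulk] from its integral part (weights 1/n_1, 1/n_2). *)
Definition hcoef_endpoint (r1 r2 : R) (k : nat) : R :=
  match k with
  | 0%nat => 2 / 3 * (1 - r1 ^ 2 - r2 ^ 2 + 2 * r1 * r2 - 2 * r1 * r2 ^ 2 - 2 * r1 ^ 2 * r2
                      + 3 * r1 ^ 2 * r2 ^ 2)
  | 1%nat => 2 / 3 * (1 - 2 * r1 - 2 * r2 + r1 ^ 2 + r2 ^ 2 + 10 * r1 * r2 - 8 * r1 * r2 ^ 2
                      - 8 * r1 ^ 2 * r2 + 7 * r1 ^ 2 * r2 ^ 2)
  | 2%nat => - 8 / 3 * (2 * r1 + 2 * r2 - 2 * r1 ^ 2 - 2 * r2 ^ 2 - 5 * r1 * r2 + 3 * r1 * r2 ^ 2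
                        + 3 * r1 ^ 2 * r2 - r1 ^ 2 * r2 ^ 2)
  | 3%nat => 8 / 3 * (1 - 3 * r1 - 3 * r2 + 2 * r1 ^ 2 + 2 * r2 ^ 2 + 5 * r1 * r2 - 2 * r1 * r2 ^ 2
                      - 2 * r1 ^ 2 * r2)
  | 4%nat => 2 / 3 * (7 - 8 * r1 - 8 * r2 + r1 ^ 2 + r2 ^ 2 + 10 * r1 * r2 - 2 * r1 * r2 ^ 2
                      - 2 * r1 ^ 2 * r2 + r1 ^ 2 * r2 ^ 2)
  | 5%nat => 2 / 3 * (3 - 2 * r1 - 2 * r2 - r1 ^ 2 - r2 ^ 2 + 2 * r1 * r2 + r1 ^ 2 * r2 ^ 2)
  | _ => 0
  end.

Definition hcoef_bulk (r1 r2 : R) (k : nat) : R :=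
  match k with
  | 0%nat => - 8 / 9 * r1 * (1 - 3 * r2 ^ 2)
  | 1%nat => - 8 / 9 * r1 * (4 * r2 - r1 + 3 * r1 * r2 ^ 2)
  | 2%nat => 32 / 9 * r1 * (1 - r2 ^ 2 + r1 * r2)
  | 3%nat => 32 / 9 * r1 * (r2 - r1 + r1 * r2 ^ 2)
  | 4%nat => - 8 / 9 * r1 * (3 - r2 ^ 2 + 4 * r1 * r2)
  | 5%nat => 8 / 9 * r1 ^ 2 * (3 - r2 ^ 2)
  | _ => 0
  end.

Definition hcoef (n1 n2 : Z) (m0 minf : nat) (r1 r2 : R) (k : nat) : R :=
  / INR minf * hcoef_endpoint r1 r2 k + / INR m0 * (-1) ^ k * hcoef_endpoint (- r1) (- r2) k
  + / IZR n1 * hcoef_bulk r1 r2 k + / IZR n2 * hcoef_bulk r2 r1 k.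

Lemma hfun_eq_poly (n1 n2 : Z) (m0 minf : nat) (r1 r2 b : R) : 1 < Rabs b ->
  hfun n1 n2 m0 minf r1 r2 b = poly_eval (hcoef n1 n2 m0 minf r1 r2) 5 b.
Proof.
  intros hb. assert (b - 1 <> 0 /\ b + 1 <> 0) as [hbm hbp] by (apply Rabs_gt_1 in hb; lra).
  unfold hfun. rewrite !alpha6_moments, !beta4_moments by exact hb.
  rewrite !moment_eq_closed by (exact hb || lia).
  simpl moment_closed. unfold poly_eval, hcoef, hcoef_endpoint, hcoef_bulk, inv_pow_integral, pc.
  simpl sum_f_R0. simpl INR. replace (1 + b) with (b + 1) by ring. unfold Rdiv.
  generalize (/ IZR n1) (/ IZR n2) (/ INR m0) (/ INR minf). intros i1 i2 j0 ji.
  field. auto.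
Qed.

Lemma poly_eval_hcoef_1 (n1 n2 : Z) (m0 minf : nat) (r1 r2 : R) :
  poly_eval (hcoef n1 n2 m0 minf r1 r2) 5 1 = 32 / 3 / INR minf * (1 - r1) ^ 2 * (1 - r2) ^ 2.
Proof. unfold poly_eval, hcoef, hcoef_endpoint, hcoef_bulk, Rdiv. simpl. ring. Qed.

Lemma poly_eval_hcoef_m1 (n1 n2 : Z) (m0 minf : nat) (r1 r2 : R) :
  poly_eval (hcoef n1 n2 m0 minf r1 r2) 5 (-1) = 32 / 3 / INR m0 * (1 + r1) ^ 2 * (1 + r2) ^ 2.
Proof. unfold poly_eval, hcoef, hcoef_endpoint, hcoef_bulk, Rdiv. simpl. ring. Qed.

Lemma poly_eval_hcoef_pos_1 (n1 n2 : Z) (m0 minf : nat) (r1 r2 : R) :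
  (0 < minf)%nat -> Rabs r1 < 1 -> Rabs r2 < 1 ->
  0 < poly_eval (hcoef n1 n2 m0 minf r1 r2) 5 1.
Proof.
  intros hminf hr1 hr2. apply lt_0_INR in hminf. apply Rabs_def2 in hr1, hr2.
  rewrite poly_eval_hcoef_1.
  apply Rmult_lt_0_compat; [apply Rmult_lt_0_compat |]; try (apply pow_lt; lra).
  apply Rdiv_lt_0_compat; lra.
Qed.

Lemma poly_eval_hcoef_pos_m1 (n1 n2 : Z) (m0 minf : nat) (r1 r2 : R) :
  (0 < m0)%nat -> Rabs r1 < 1 -> Rabs r2 < 1 ->
  0 < poly_eval (hcoef n1 n2 m0 minf r1 r2) 5 (-1).
Proof.
  intros hm0 hr1 hr2. apply lt_0_INR in hm0. apply Rabs_def2 in hr1, hr2.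
  rewrite poly_eval_hcoef_m1.
  apply Rmult_lt_0_compat; [apply Rmult_lt_0_compat |]; try (apply pow_lt; lra).
  apply Rdiv_lt_0_compat; lra.
Qed.

Lemma hcoef_5 (n1 n2 : Z) (m0 minf : nat) (r1 r2 : R) :
  n1 <> 0%Z -> n2 <> 0%Z -> (0 < m0)%nat -> (0 < minf)%nat ->
  hcoef n1 n2 m0 minf r1 r2 5
  = 2 * ffun n1 n2 m0 minf r1 r2 / (9 * INR m0 * INR minf * IZR n1 * IZR n2).
Proof.
  intros hn1 hn2 hm0 hminf.
  apply not_0_IZR in hn1, hn2. apply lt_0_INR in hm0, hminf.
  unfold hcoef, hcoef_endpoint, hcoef_bulk, ffun. field. lra.
Qed.

Lemma hcoef_5_neq_0 (n1 n2 : Z) (m0 minf : nat) (r1 r2 : R) :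
  n1 <> 0%Z -> n2 <> 0%Z -> (0 < m0)%nat -> (0 < minf)%nat ->
  ffun n1 n2 m0 minf r1 r2 <> 0 -> hcoef n1 n2 m0 minf r1 r2 5 <> 0.
Proof.
  intros hn1 hn2 hm0 hminf hf. rewrite hcoef_5 by assumption.
  apply not_0_IZR in hn1, hn2. apply lt_0_INR in hm0, hminf.
  unfold Rdiv. apply Rmult_integral_contrapositive_currified; [lra |].
  apply Rinv_neq_0_compat. repeat apply Rmult_integral_contrapositive_currified; lra.
Qed.

Theorem mainTheorem15 (n1 n2 : Z) (m0 minf : nat) (r1 r2 : R) :
  n1 <> 0%Z -> n2 <> 0%Z -> (0 < m0)%nat -> (0 < minf)%nat ->
  0 < Rabs r1 < 1 -> 0 < Rabs r2 < 1 ->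
  0 < r1 * IZR n1 -> 0 < r2 * IZR n2 ->
  (exists c : nat -> R,
     (forall b, 1 < Rabs b ->
        hfun n1 n2 m0 minf r1 r2 b = sum_f_R0 (fun k => c k * b ^ k) 5) /\
     c 5%nat = 2 * ffun n1 n2 m0 minf r1 r2
               / (9 * INR m0 * INR minf * IZR n1 * IZR n2)) /\
  (exists L, filterlim (hfun n1 n2 m0 minf r1 r2) (at_right 1) (locally L) /\ 0 < L) /\
  (exists L, filterlim (hfun n1 n2 m0 minf r1 r2) (at_left (-1)) (locally L) /\ 0 < L) /\
  (ffun n1 n2 m0 minf r1 r2 <> 0 ->
     exists b, 1 < Rabs b /\ hfun n1 n2 m0 minf r1 r2 b = 0).
Proof.
  intros hn1 hn2 hm0 hminf [_ hr1] [_ hr2] _ _.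
  set (c := hcoef n1 n2 m0 minf r1 r2).
  assert (hh : forall b, 1 < Rabs b -> hfun n1 n2 m0 minf r1 r2 b = poly_eval c 5 b)
    by (intros; now apply hfun_eq_poly).
  assert (hcont : continuity (poly_eval c 5)) by apply continuity_finite_sum.
  assert (hP1 : 0 < poly_eval c 5 1) by now apply poly_eval_hcoef_pos_1.
  assert (hPm1 : 0 < poly_eval c 5 (-1)) by now apply poly_eval_hcoef_pos_m1.
  split; [| split; [| split]].
  - exists c. split; [exact hh | now apply hcoef_5].
  - exists (poly_eval c 5 1). split; [| exact hP1].
    apply filterlim_at_right_agree; [| apply hcont].
    intros x hx. apply hh, Rabs_gt_1. now right.
  - exists (poly_eval c 5 (-1)). split; [| exact hPm1].
    apply filterlim_at_left_agree; [| apply hcont].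
    intros x hx. apply hh, Rabs_gt_1. now left.
  - intros hf.
    destruct (odd_poly_root_outside c 2) as [b [hb hb0]]; try assumption.
    + now apply hcoef_5_neq_0.
    + exists b. split; [exact hb |]. now rewrite hh.
Qed.
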